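(* Let $\{G_i\}_{i\in I}$ be a family of groups such that each abelianization $G_i^{ab}=G_i/G_i'$ has finite exponent and $\gcd(\exp(G_i^{ab}),\exp(G_j^{ab}))=1$ for all $i\ne j$. Then $\prod_{i\in I}G_i$ is capable if and only if each $G_i$ is capable. Likewise, for any $c\ge1$, $\prod_{i\in I}G_i$ is $\mathcal{N}_c$-capable if and only if each $G_i$ is $\mathcal{N}_c$-capable.
   Context: $\prod_{i\in I}G_i$ is the restricted direct product. A group $G$ is capable if $G\cong E/Z(E)$ for some group $E$. $\mathcal{N}_c$ is the variety of nilpotent groups of class at most $c$ (law $[x_1,\dots,x_{c+1}]$). For a variety $\mathcal{V}$ with laws $V$, the marginal subgroup $V^*(E)$ of a group $E$ is the set of $g\in E$ with $v(x_1,\dots,gx_i,\dots,x_n)=v(x_1,\dots,x_n)$ for all laws $v\in V$, all $x_j\in E$ and all $i$ (for $\mathcal{N}_c$ it is the $c$-th centre $Z_c(E)$); $G$ is $\mathcal{V}$-capable if $G\cong E/V^*(E)$ for some group $E$. *)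

From Stdlib Require Import Arith List FunctionalExtensionality ProofIrrelevance.
Import ListNotations.
Set Implicit Arguments.

Record Group := {
  car :> Type;
  gmul : car -> car -> car;
  ginv : car -> car;
  gone : car;
  gmulA : forall x y z, gmul x (gmul y z) = gmul (gmul x y) z;
  gmul1 : forall x, gmul gone x = x;
  gmulV : forall x, gmul (ginv x) x = gone
}.

Arguments gmul {g}.
Arguments ginv {g}.
Arguments gone {g}.
Arguments gmulA {g}.
Arguments gmul1 {g}.
Arguments gmulV {g}.

Definition is_hom {A B : Group} (f : A -> B) : Prop :=
  forall x y, f (gmul x y) = gmul (f x) (f y).

Definition comm {G : Group} (a b : G) : G :=
  gmul (gmul (gmul (ginv a) (ginv b)) a) b.

Definition center {E : Group} (z : E) : Prop := forall x : E, gmul z x = gmul x z.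

Fixpoint zeta (E : Group) (c : nat) : E -> Prop :=
  match c with
  | 0 => fun g => g = gone
  | S k => fun g => forall x : E, @zeta E k (comm g x)
  end.

(* G is capable: G ≅ E/Z(E), i.e. there is a surjective homomorphism E -> G
   with kernel exactly Z(E). *)
Definition capable (G : Group) : Prop :=
  exists (E : Group) (f : E -> G),
    is_hom f /\ (forall g : G, exists e : E, f e = g) /\
    (forall e : E, f e = gone <-> center e).

(* G is N_c-capable: G ≅ E / N_c^*(E) = E / Z_c(E). *)
Definition Nc_capable (c : nat) (G : Group) : Prop :=
  exists (E : Group) (f : E -> G),
    is_hom f /\ (forall g : G, exists e : E, f e = g) /\
    (forall e : E, f e = gone <-> zeta E c e).

Fixpoint gpow {G : Group} (g : G) (n : nat) : G :=
  match n with 0 => gone | S k => gmul g (gpow g k) end.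

Inductive in_derived (G : Group) : G -> Prop :=
  | der1 : in_derived G gone
  | derc : forall a b h, in_derived G h -> in_derived G (gmul (comm a b) h).

Definition exp_ab (G : Group) (n : nat) : Prop :=
  0 < n /\ (forall g : G, in_derived G (gpow g n)) /\
  (forall m, 0 < m -> (forall g : G, in_derived G (gpow g m)) -> n <= m).

Section RProd.
Variables (I : Type) (G : I -> Group).

Definition fin_supp (f : forall i, G i) : Prop :=
  exists l : list I, forall i, ~ In i l -> f i = gone.

Definition rp_car := { f : forall i, G i | fin_supp f }.

Lemma rp_mul_supp (f g : rp_car) :
  fin_supp (fun i => gmul (proj1_sig f i) (proj1_sig g i)).
Proof.
  destruct f as [f [l1 H1]], g as [g [l2 H2]]; exists (l1 ++ l2); simpl.
  intros i Hi; rewrite H1, H2; [apply gmul1| |];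
  intro; apply Hi; apply in_or_app; auto.
Qed.

Lemma ginv1 (H : Group) : ginv (@gone H) = gone.
Proof.
  rewrite <- (gmulV (@gone H)) at 2.
  assert (Hr : forall x : H, gmul x gone = x).
  { intro x.
    assert (E1 : gmul (ginv (ginv x)) (ginv x) = gone) by apply gmulV.
    assert (E2 : gmul x (ginv x) = gone).
    { rewrite <- (gmul1 (gmul x (ginv x))), <- E1 at 1.
      rewrite <- gmulA, (gmulA (ginv x)), gmulV, gmul1. exact E1. }
    rewrite <- (gmulV x), gmulA, E2, gmul1. reflexivity. }
  rewrite Hr. reflexivity.
Qed.

Lemma rp_inv_supp (f : rp_car) : fin_supp (fun i => ginv (proj1_sig f i)).
Proof.
  destruct f as [f [l H]]; exists l; simpl; intros i Hi; rewrite H by exact Hi.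
  apply ginv1.
Qed.

Lemma rp_one_supp : fin_supp (fun i => @gone (G i)).
Proof. exists nil; auto. Qed.

Definition rp_mul (f g : rp_car) : rp_car := exist _ _ (rp_mul_supp f g).
Definition rp_inv (f : rp_car) : rp_car := exist _ _ (rp_inv_supp f).
Definition rp_one : rp_car := exist _ _ rp_one_supp.

Lemma rp_eq (f g : rp_car) : (forall i, proj1_sig f i = proj1_sig g i) -> f = g.
Proof.
  destruct f as [f Hf], g as [g Hg]; simpl; intro H.
  assert (f = g) by (apply functional_extensionality_dep; exact H).
  subst; f_equal; apply proof_irrelevance.
Qed.

Lemma rp_mulA x y z : rp_mul x (rp_mul y z) = rp_mul (rp_mul x y) z.
Proof. apply rp_eq; intro; apply gmulA. Qed.
Lemma rp_mul1 x : rp_mul rp_one x = x.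
Proof. apply rp_eq; intro; apply gmul1. Qed.
Lemma rp_mulV x : rp_mul (rp_inv x) x = rp_one.
Proof. apply rp_eq; intro; apply gmulV. Qed.

Definition RestrictedProduct : Group :=
  @Build_Group rp_car rp_mul rp_inv rp_one rp_mulA rp_mul1 rp_mulV.
End RProd.

(* If G_i = E_i / Z_c(E_i) for every i, then the restricted product of the E_i maps onto
   the restricted product of the G_i with kernel the product of the Z_c(E_i), which is
   Z_c of the product.

   Conversely, let psi : E -> prod G_i be onto with kernel Z_{k+1}(E), and let E_i be the
   preimage of the i-th factor. Modulo Z_k(E) the map x |-> [x, t] is a homomorphism on E_i
   with central values whenever [E_i, t] lies in Z_{k+1}(E); hence it kills the preimage of
   G_i', and [a, b] is killed by exp(G_i^ab) modulo Z_k(E) for a in E_i, b in E_j.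
   Symmetrically it is killed by exp(G_j^ab), so coprimality gives [E_i, E_j] <= Z_k(E), and
   then [E_i, B_i] <= Z_k(E) for the preimage B_i of the other factors, because modulo
   Z_{k+1}(E) every element of B_i is a finite product of elements of the E_j, j <> i.
   A Hall-Witt induction upgrades this to [gamma_m(E_i), B_i] <= Z_{k+1-m}(E); as
   E = E_i B_i, this yields Z_{k+1}(E_i) = Z_{k+1}(E) ∩ E_i, i.e. G_i = E_i / Z_{k+1}(E_i).
   Capability is the case c = 1. *)

From Stdlib Require Import Arith Lia List FunctionalExtensionality ProofIrrelevance
  ClassicalEpsilon PropExtensionality.
Import ListNotations.

Section GroupLaws.
Variable H : Group.
Implicit Types x y z : H.

Lemma gmulAr x y z : gmul (gmul x y) z = gmul x (gmul y z).
Proof. symmetry; apply gmulA. Qed.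

Lemma mulKg x y : gmul (ginv x) (gmul x y) = y.
Proof. rewrite gmulA, gmulV; apply gmul1. Qed.

Lemma mulgI x y z : gmul x y = gmul x z -> y = z.
Proof. intro Exy; rewrite <- (mulKg x y), Exy; apply mulKg. Qed.

Lemma mulgV x : gmul x (ginv x) = gone.
Proof.
  transitivity (gmul (gmul (ginv (ginv x)) (ginv x)) (gmul x (ginv x))).
  - rewrite gmulV; symmetry; apply gmul1.
  - rewrite gmulAr, (mulKg x); apply gmulV.
Qed.

Lemma mulg1 x : gmul x gone = x.
Proof. rewrite <- (gmulV x), gmulA, mulgV; apply gmul1. Qed.

Lemma mulKVg x y : gmul x (gmul (ginv x) y) = y.
Proof. rewrite gmulA, mulgV; apply gmul1. Qed.

Lemma invgK x : ginv (ginv x) = x.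
Proof. apply (mulgI (ginv x)); rewrite mulgV, gmulV; reflexivity. Qed.

Lemma invMg x y : ginv (gmul x y) = gmul (ginv y) (ginv x).
Proof. apply (mulgI (gmul x y)); rewrite mulgV, gmulAr, mulKVg, mulgV; reflexivity. Qed.
End GroupLaws.
Arguments gmulAr {H} x y z.
Arguments mulgI {H} x y z.

Create HintDb group.
#[global] Hint Rewrite @gmulAr @gmul1 mulg1 @gmulV mulgV mulKg mulKVg invMg invgK ginv1
  : group.

Definition conjg {H : Group} (x g : H) : H := gmul (gmul (ginv g) x) g.

Ltac group := unfold comm, conjg; autorewrite with group; reflexivity.

Section Commutators.
Variable H : Group.
Implicit Types x y z w g : H.

Lemma comm1g y : comm gone y = gone.
Proof. group. Qed.

Lemma invg_comm x y : ginv (comm x y) = comm y x.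
Proof. group. Qed.

Lemma commMg x y z : comm (gmul x y) z = gmul (conjg (comm x z) y) (comm y z).
Proof. group. Qed.

Lemma commgM x y z : comm x (gmul y z) = gmul (comm x z) (conjg (comm x y) z).
Proof. group. Qed.

Lemma commVg x y : comm (ginv x) y = conjg (ginv (comm x y)) (ginv x).
Proof. group. Qed.

Lemma commgV x y : comm x (ginv y) = conjg (ginv (comm x y)) (ginv y).
Proof. group. Qed.

Lemma comm_conjg x g y : comm (conjg x g) y = conjg (comm x (conjg y (ginv g))) g.
Proof. group. Qed.

Lemma comm_eq1 x y : comm x y = gone -> gmul x y = gmul y x.
Proof.
  intro Hxy; transitivity (gmul (gmul y x) (comm x y)); [group|].
  rewrite Hxy; apply mulg1.
Qed.

Lemma hall_witt x w z :
  comm (comm x w) z =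
  conjg (ginv (gmul (conjg (comm (comm (ginv w) (ginv z)) x) z)
                    (conjg (comm (comm z (ginv x)) (ginv w)) x))) w.
Proof. group. Qed.
End Commutators.

Section Homomorphisms.
Variables (A B : Group) (f : A -> B).
Hypothesis f_hom : is_hom f.

Lemma hom1 : f gone = gone.
Proof. apply (mulgI (f gone)); rewrite <- f_hom, !mulg1; reflexivity. Qed.

Lemma homV x : f (ginv x) = ginv (f x).
Proof. apply (mulgI (f x)); rewrite <- f_hom, !mulgV; apply hom1. Qed.

Lemma hom_comm x y : f (comm x y) = comm (f x) (f y).
Proof. unfold comm; rewrite !f_hom, !homV; reflexivity. Qed.

Lemma hom_pow x n : f (gpow x n) = gpow (f x) n.
Proof. induction n as [|n IH]; simpl; [apply hom1|rewrite f_hom, IH; reflexivity]. Qed.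
End Homomorphisms.

Section Powers.
Variable H : Group.
Implicit Types x : H.

Lemma gpowD x m n : gpow x (m + n) = gmul (gpow x m) (gpow x n).
Proof. induction m as [|m IH]; simpl; [|rewrite IH]; group. Qed.

Lemma gpow1 n : gpow (@gone H) n = gone.
Proof. induction n as [|n IH]; simpl; [|rewrite IH]; group. Qed.

Lemma gpowM x m n : gpow x (m * n) = gpow (gpow x m) n.
Proof.
  induction n as [|n IH]; simpl; [rewrite Nat.mul_0_r; reflexivity|].
  rewrite Nat.mul_succ_r, Nat.add_comm, gpowD, IH; reflexivity.
Qed.

Lemma gpow_coprime_eq1 x m n : 0 < m -> Nat.gcd m n = 1 ->
  gpow x m = gone -> gpow x n = gone -> x = gone.
Proof.
  intros m_gt0 coprime_mn xm1 xn1.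
  destruct (Nat.gcd_bezout_pos m n m_gt0) as [a [b bezout]]; rewrite coprime_mn in bezout.
  assert (xam1 : gpow x (a * m) = gone)
    by (rewrite Nat.mul_comm, gpowM, xm1; apply gpow1).
  assert (xbn1 : gpow x (b * n) = gone)
    by (rewrite Nat.mul_comm, gpowM, xn1; apply gpow1).
  rewrite bezout, gpowD, xbn1 in xam1; simpl in xam1.
  autorewrite with group in xam1; exact xam1.
Qed.

Lemma gpowV x n : gpow (ginv x) n = ginv (gpow x n).
Proof.
  assert (x_comm_pow : forall m, gmul x (gpow x m) = gmul (gpow x m) x).
  { induction m as [|m IH]; simpl; [group|rewrite IH at 1; apply gmulA]. }
  induction n as [|n IH]; simpl; [group|].
  rewrite IH, x_comm_pow; group.
Qed.
End Powers.

Section UpperCentralSeries.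
Variable E : Group.

Lemma zeta_normal k :
  zeta E k gone /\
  (forall x y, zeta E k x -> zeta E k y -> zeta E k (gmul x y)) /\
  (forall x, zeta E k x -> zeta E k (ginv x)) /\
  (forall x g, zeta E k x -> zeta E k (conjg x g)).
Proof.
  induction k as [|k (Z1 & ZM & ZV & ZJ)]; simpl.
  - repeat split; intros; subst; group.
  - repeat split.
    + intro x; rewrite comm1g; exact Z1.
    + intros x y Hx Hy e; rewrite commMg; apply ZM; [apply ZJ|]; auto.
    + intros x Hx e; rewrite commVg; apply ZJ, ZV, Hx.
    + intros x g Hx e; rewrite comm_conjg; apply ZJ, Hx.
Qed.

Lemma zeta1 k : zeta E k gone.
Proof. apply zeta_normal. Qed.

Lemma zetaM k x y : zeta E k x -> zeta E k y -> zeta E k (gmul x y).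
Proof. apply zeta_normal. Qed.

Lemma zetaV k x : zeta E k x -> zeta E k (ginv x).
Proof. apply zeta_normal. Qed.

Lemma zetaJ k x g : zeta E k x -> zeta E k (conjg x g).
Proof. apply zeta_normal. Qed.

Lemma zeta_comm_sym k x y : zeta E k (comm y x) -> zeta E k (comm x y).
Proof. intro Hyx; rewrite <- invg_comm; apply zetaV, Hyx. Qed.
End UpperCentralSeries.

Inductive left_normed {H : Group} (P : H -> Prop) : nat -> H -> Prop :=
  | left_normed1 a : P a -> left_normed P 1 a
  | left_normedS m y a : left_normed P m y -> P a -> left_normed P (S m) (comm y a).

Lemma zeta_comm_left_normed (E : Group) (P : E -> Prop) m y : left_normed P m y ->
  forall n z, zeta E (n + m) z -> zeta E n (comm z y).
Proof.
  induction 1 as [a _ | m y a _ IH _]; intros n z Hz.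
  - rewrite Nat.add_1_r in Hz; apply Hz.
  - rewrite Nat.add_succ_r in Hz.
    apply zeta_comm_sym; rewrite hall_witt.
    apply zetaJ, zetaV, zetaM; apply zetaJ.
    + apply IH, zeta_comm_sym, (zetaV _ _ _ Hz).
    + assert (Hzy : zeta E (S n) (comm z (ginv y))).
      { rewrite commgV; apply zetaJ, zetaV, IH; exact Hz. }
      apply Hzy.
Qed.

Section Quotient.
Variables (E : Group) (W : E -> Prop).
Hypothesis W1 : W gone.
Hypothesis WM : forall x y, W x -> W y -> W (gmul x y).
Hypothesis WV : forall x, W x -> W (ginv x).
Hypothesis WJ : forall x g, W x -> W (conjg x g).

Definition coset_pred (x : E) : E -> Prop := fun y => W (gmul (ginv x) y).
Definition coset_car : Type := {P : E -> Prop | exists x, P = coset_pred x}.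
Definition coset (x : E) : coset_car := exist _ (coset_pred x) (ex_intro _ x eq_refl).
Definition coset_repr (P : coset_car) : E :=
  proj1_sig (constructive_indefinite_description _ (proj2_sig P)).

Lemma coset_car_eq (X Y : coset_car) : proj1_sig X = proj1_sig Y -> X = Y.
Proof. destruct X, Y; simpl; intros ->; f_equal; apply proof_irrelevance. Qed.

Lemma coset_reprK P : coset (coset_repr P) = P.
Proof.
  apply coset_car_eq; unfold coset_repr.
  destruct (constructive_indefinite_description _ _) as [x Hx]; symmetry; exact Hx.
Qed.

Lemma coset_eq x y : coset x = coset y <-> W (gmul (ginv x) y).
Proof.
  split.
  - intro Exy.
    assert (Hy : coset_pred x y = coset_pred y y)
      by (change (proj1_sig (coset x) y = proj1_sig (coset y) y); rewrite Exy; reflexivity).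
    unfold coset_pred in Hy; rewrite Hy, gmulV; exact W1.
  - intro Hxy; apply coset_car_eq; simpl.
    apply functional_extensionality; intro z; apply propositional_extensionality.
    unfold coset_pred; split; intro Hz.
    + replace (gmul (ginv y) z)
        with (gmul (ginv (gmul (ginv x) y)) (gmul (ginv x) z)) by group; auto.
    + replace (gmul (ginv x) z) with (gmul (gmul (ginv x) y) (gmul (ginv y) z)) by group.
      auto.
Qed.

Lemma coset_repr_eq x : W (gmul (ginv (coset_repr (coset x))) x).
Proof. apply coset_eq; rewrite coset_reprK; reflexivity. Qed.

Lemma coset_ind (P : coset_car -> Prop) : (forall x, P (coset x)) -> forall X, P X.
Proof. intros HP X; rewrite <- (coset_reprK X); apply HP. Qed.

Definition coset_mul (X Y : coset_car) : coset_car :=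
  coset (gmul (coset_repr X) (coset_repr Y)).
Definition coset_inv (X : coset_car) : coset_car := coset (ginv (coset_repr X)).
Definition coset_one : coset_car := coset gone.

Lemma coset_mulE x y : coset_mul (coset x) (coset y) = coset (gmul x y).
Proof.
  unfold coset_mul; apply coset_eq.
  pose proof (coset_repr_eq x) as Hx; pose proof (coset_repr_eq y) as Hy.
  set (a := coset_repr (coset x)) in *; set (b := coset_repr (coset y)) in *.
  replace (gmul (ginv (gmul a b)) (gmul x y))
    with (gmul (conjg (gmul (ginv a) x) b) (gmul (ginv b) y)) by group.
  auto.
Qed.

Lemma coset_invE x : coset_inv (coset x) = coset (ginv x).
Proof.
  unfold coset_inv; apply coset_eq.
  pose proof (coset_repr_eq x) as Hx; set (a := coset_repr (coset x)) in *.
  replace (gmul (ginv (ginv a)) (ginv x)) with (conjg (ginv (gmul (ginv a) x)) (ginv x))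
    by group.
  auto.
Qed.

Lemma coset_mulA X Y Z : coset_mul X (coset_mul Y Z) = coset_mul (coset_mul X Y) Z.
Proof.
  revert X Y Z; do 3 (refine (coset_ind _ _); intro).
  rewrite !coset_mulE, gmulA; reflexivity.
Qed.

Lemma coset_mul1 X : coset_mul coset_one X = X.
Proof.
  revert X; refine (coset_ind _ _); intro x.
  unfold coset_one; rewrite coset_mulE, gmul1; reflexivity.
Qed.

Lemma coset_mulV X : coset_mul (coset_inv X) X = coset_one.
Proof.
  revert X; refine (coset_ind _ _); intro x.
  rewrite coset_invE, coset_mulE, gmulV; reflexivity.
Qed.

Definition quotient_group : Group :=
  @Build_Group coset_car coset_mul coset_inv coset_one coset_mulA coset_mul1 coset_mulV.

Definition quotient_map (x : E) : quotient_group := coset x.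

Lemma quotient_map_hom : is_hom quotient_map.
Proof. intros x y; symmetry; apply coset_mulE. Qed.

Lemma quotient_map_surj (X : quotient_group) : exists x, quotient_map x = X.
Proof. exists (coset_repr X); apply coset_reprK. Qed.

Lemma quotient_map_eq1 x : quotient_map x = gone <-> W x.
Proof.
  change (coset x = coset gone <-> W x); rewrite coset_eq, mulg1.
  split; intro Hx; [rewrite <- invgK|]; auto.
Qed.
End Quotient.

Definition upper_quotient (E : Group) (k : nat) : Group :=
  quotient_group E (zeta E k) (zeta1 E k) (zetaM E k) (zetaV E k) (zetaJ E k).

Definition upper_quotient_map (E : Group) (k : nat) : E -> upper_quotient E k :=
  quotient_map E (zeta E k) (zeta1 E k) (zetaM E k) (zetaV E k) (zetaJ E k).

Lemma upper_quotient_map_hom E k : is_hom (upper_quotient_map E k).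
Proof. apply quotient_map_hom. Qed.

Lemma upper_quotient_map_eq1 E k x : upper_quotient_map E k x = gone <-> zeta E k x.
Proof. apply quotient_map_eq1. Qed.

Lemma upper_quotient_map_central E k s :
  zeta E (S k) s -> center (upper_quotient_map E k s).
Proof.
  intros Hs X; destruct (quotient_map_surj _ _ _ _ _ _ X) as [e <-].
  apply comm_eq1; fold (upper_quotient_map E k e).
  rewrite <- (hom_comm _ _ _ (upper_quotient_map_hom E k)).
  apply upper_quotient_map_eq1, Hs.
Qed.

Section Center.
Variable H : Group.
Implicit Types a b : H.

Lemma center1 : center (@gone H).
Proof. intro x; group. Qed.

Lemma centerM a b : center a -> center b -> center (gmul a b).
Proof. intros Ha Hb x; rewrite gmulAr, Hb, gmulA, Ha, gmulAr; reflexivity. Qed.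

Lemma centerV a : center a -> center (ginv a).
Proof.
  intros Ha x; apply (mulgI a).
  rewrite gmulA, mulgV, gmul1, gmulA, Ha, gmulAr, mulgV, mulg1; reflexivity.
Qed.

Lemma comm_center_eq1 a b : center a -> comm a b = gone.
Proof. intro Ha; unfold comm; rewrite (centerV _ Ha); group. Qed.
End Center.

Inductive comm_products {H : Group} (U : H -> Prop) : H -> Prop :=
  | comm_products1 : comm_products U gone
  | comm_productsM u v d :
      U u -> U v -> comm_products U d -> comm_products U (gmul (comm u v) d).

Lemma comm_products_hom (A B : Group) (f : A -> B) (U : A -> Prop) d :
  is_hom f -> comm_products U d -> comm_products (fun y => exists x, U x /\ y = f x) (f d).
Proof.
  intros f_hom Ud; induction Ud as [|u v d Uu Uv _ IH].
  - rewrite (hom1 _ _ _ f_hom); constructor.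
  - rewrite f_hom, (hom_comm _ _ _ f_hom); constructor; eauto.
Qed.

Section CommutatorWithFixedElement.
Variables (H : Group) (t : H).

Lemma commMg_central x y :
  center (comm x t) -> comm (gmul x y) t = gmul (comm x t) (comm y t).
Proof.
  intro Hx; rewrite commMg; unfold conjg.
  rewrite (gmulAr (ginv y)), Hx, mulKg; reflexivity.
Qed.

Lemma commVg_central x : center (comm x t) -> comm (ginv x) t = ginv (comm x t).
Proof.
  intro Hx; rewrite commVg; unfold conjg.
  rewrite invgK, (gmulAr x), (centerV _ _ Hx), mulKVg; reflexivity.
Qed.

Lemma comm_comm_central u v :
  center (comm u t) -> center (comm v t) -> comm (comm u v) t = gone.
Proof.
  intros Hu Hv.
  assert (Hu' : center (comm (ginv u) t)) by (rewrite commVg_central; auto; apply centerV, Hu).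
  assert (Hv' : center (comm (ginv v) t)) by (rewrite commVg_central; auto; apply centerV, Hv).
  assert (Huv : center (comm (gmul (ginv u) (ginv v)) t))
    by (rewrite commMg_central; auto; apply centerM; auto).
  assert (Huvu : center (comm (gmul (gmul (ginv u) (ginv v)) u) t))
    by (rewrite commMg_central; auto; apply centerM; auto).
  change (comm (gmul (gmul (gmul (ginv u) (ginv v)) u) v) t = gone).
  rewrite !commMg_central, !commVg_central by auto.
  apply comm_center_eq1; exact Hu.
Qed.

Lemma comm_products_comm (U : H -> Prop) d :
  (forall u, U u -> center (comm u t)) -> comm_products U d -> comm d t = gone.
Proof.
  intros HU Hd; induction Hd as [|u v d Uu Uv _ IH]; [apply comm1g|].
  assert (Huv : comm (comm u v) t = gone) by (apply comm_comm_central; auto).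
  rewrite commMg_central, Huv, IH by (rewrite Huv; apply center1); apply gmul1.
Qed.

Lemma comm_pow_central x n : center (comm x t) -> comm (gpow x n) t = gpow (comm x t) n.
Proof.
  intro Hx; induction n as [|n IH]; simpl; [apply comm1g|].
  rewrite commMg_central, IH by exact Hx; reflexivity.
Qed.

Lemma comm_pow_eq1_of_pow_derived (U : H -> Prop) x n d z :
  (forall u, U u -> center (comm u t)) -> U x -> comm_products U d ->
  comm z t = gone -> gpow x n = gmul d z -> gpow (comm x t) n = gone.
Proof.
  intros HU Ux Ud Hz Hxn.
  assert (Hd : comm d t = gone) by (apply (comm_products_comm U); auto).
  rewrite <- comm_pow_central, Hxn, commMg_central, Hd, Hz by (auto; rewrite Hd; apply center1).
  apply gmul1.
Qed.
End CommutatorWithFixedElement.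

Section Subgroup.
Variables (E : Group) (P : E -> Prop).
Hypothesis P1 : P gone.
Hypothesis PM : forall x y, P x -> P y -> P (gmul x y).
Hypothesis PV : forall x, P x -> P (ginv x).

Definition sub_car : Type := {x : E | P x}.
Definition sub_mul (x y : sub_car) : sub_car := exist _ _ (PM _ _ (proj2_sig x) (proj2_sig y)).
Definition sub_inv (x : sub_car) : sub_car := exist _ _ (PV _ (proj2_sig x)).
Definition sub_one : sub_car := exist _ _ P1.

Lemma sub_eq (x y : sub_car) : proj1_sig x = proj1_sig y -> x = y.
Proof. destruct x, y; simpl; intros ->; f_equal; apply proof_irrelevance. Qed.

Lemma sub_mulA x y z : sub_mul x (sub_mul y z) = sub_mul (sub_mul x y) z.
Proof. apply sub_eq, gmulA. Qed.

Lemma sub_mul1 x : sub_mul sub_one x = x.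
Proof. apply sub_eq, gmul1. Qed.

Lemma sub_mulV x : sub_mul (sub_inv x) x = sub_one.
Proof. apply sub_eq, gmulV. Qed.

Definition subgroup : Group :=
  @Build_Group sub_car sub_mul sub_inv sub_one sub_mulA sub_mul1 sub_mulV.

Lemma zeta_subgroup m (x : subgroup) : zeta E m (proj1_sig x) -> zeta subgroup m x.
Proof.
  revert x; induction m as [|m IH]; simpl; intros x Hx.
  - apply sub_eq, Hx.
  - intro y; apply IH, Hx.
Qed.
End Subgroup.

Section Singletons.
Variables (I : Type) (G : I -> Group).

Definition index_eq_dec (a b : I) : {a = b} + {a <> b} := excluded_middle_informative (a = b).

Definition single_fun (j : I) (x : G j) : forall l, G l :=
  fun l => match index_eq_dec j l with left e => eq_rect j G x l e | right _ => gone end.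

Lemma single_fun_supp j x : fin_supp G (single_fun j x).
Proof.
  exists [j]; intros l Hl; unfold single_fun.
  destruct (index_eq_dec j l) as [<-|]; [exfalso; apply Hl; left|]; reflexivity.
Qed.

Definition single (j : I) (x : G j) : RestrictedProduct G :=
  exist _ (single_fun j x) (single_fun_supp j x).

Lemma single_at j x : proj1_sig (single j x) j = x.
Proof.
  simpl; unfold single_fun; destruct (index_eq_dec j j) as [e|]; [|contradiction].
  rewrite (proof_irrelevance _ e eq_refl); reflexivity.
Qed.

Lemma single_off j x l : j <> l -> proj1_sig (single j x) l = gone.
Proof. intro jl; simpl; unfold single_fun; destruct (index_eq_dec j l); tauto. Qed.

Lemma single_hom j : is_hom (single j).
Proof.
  intros x y; apply rp_eq; intro l.
  change (proj1_sig (single j (gmul x y)) l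
          = gmul (proj1_sig (single j x) l) (proj1_sig (single j y) l)).
  destruct (index_eq_dec j l) as [<-|jl].
  - rewrite !single_at; reflexivity.
  - rewrite !single_off by exact jl; group.
Qed.

Lemma zeta_restricted_product m (p : RestrictedProduct G) :
  zeta (RestrictedProduct G) m p <-> forall i, zeta (G i) m (proj1_sig p i).
Proof.
  revert p; induction m as [|m IH]; intro p; simpl.
  - split; [intros -> i; reflexivity|intro Hp; apply rp_eq, Hp].
  - split.
    + intros Hp i y.
      pose proof (proj1 (IH _) (Hp (single i y)) i) as Hi.
      change (zeta (G i) m (comm (proj1_sig p i) (proj1_sig (single i y) i))) in Hi.
      rewrite single_at in Hi; exact Hi.
    + intros Hp x; apply IH; intro i; apply Hp.
Qed.
End Singletons.
Arguments single {I G} j x.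
Arguments index_eq_dec {I} a b.

Lemma capable_iff_Nc_capable1 (G : Group) : capable G <-> Nc_capable 1 G.
Proof.
  assert (center_zeta1 : forall (E : Group) (e : E), center e <-> zeta E 1 e).
  { intros E e; split; [intros He x; apply comm_center_eq1, He|intros He x; apply comm_eq1, He]. }
  split; intros (E & f & f_hom & f_surj & f_ker); exists E, f;
    (split; [exact f_hom|split; [exact f_surj|]]); intro e;
    rewrite f_ker, center_zeta1; reflexivity.
Qed.

Section ProductOfCapable.
Variables (I : Type) (G : I -> Group) (c : nat).
Hypothesis G_capable : forall i, Nc_capable c (G i).

Definition cover (i : I) : Group :=
  proj1_sig (constructive_indefinite_description _ (G_capable i)).

Definition cover_map (i : I) : cover i -> G i :=
  proj1_sig (constructive_indefinite_description _
    (proj2_sig (constructive_indefinite_description _ (G_capable i)))).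

Lemma cover_map_spec i :
  is_hom (cover_map i) /\ (forall g, exists e, cover_map i e = g) /\
  (forall e, cover_map i e = gone <-> zeta (cover i) c e).
Proof.
  exact (proj2_sig (constructive_indefinite_description _
    (proj2_sig (constructive_indefinite_description _ (G_capable i))))).
Qed.

(* Lifting [gone] to [gone] keeps lifts of finitely supported families finitely supported. *)
Definition cover_lift (i : I) (g : G i) : cover i :=
  if excluded_middle_informative (g = gone) then gone
  else proj1_sig (constructive_indefinite_description _ (proj1 (proj2 (cover_map_spec i)) g)).

Lemma cover_liftK i g : cover_map i (cover_lift i g) = g.
Proof.
  unfold cover_lift; destruct excluded_middle_informative as [->|_].
  - exact (hom1 _ _ _ (proj1 (cover_map_spec i))).
  - destruct (constructive_indefinite_description _ _) as [e He]; exact He.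
Qed.

Lemma cover_map_supp (p : RestrictedProduct cover) :
  fin_supp G (fun i => cover_map i (proj1_sig p i)).
Proof.
  destruct p as [p [l Hl]]; exists l; intros i Hi; simpl; rewrite Hl by exact Hi.
  exact (hom1 _ _ _ (proj1 (cover_map_spec i))).
Qed.

Definition product_cover_map (p : RestrictedProduct cover) : RestrictedProduct G :=
  exist _ _ (cover_map_supp p).

Lemma cover_lift_supp (q : RestrictedProduct G) :
  fin_supp cover (fun i => cover_lift i (proj1_sig q i)).
Proof.
  destruct q as [q [l Hl]]; exists l; intros i Hi; simpl; rewrite Hl by exact Hi.
  unfold cover_lift; destruct excluded_middle_informative; [reflexivity|contradiction].
Qed.

Lemma Nc_capable_restricted_product : Nc_capable c (RestrictedProduct G).
Proof.
  exists (RestrictedProduct cover), product_cover_map; split; [|split].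
  - intros x y; apply rp_eq; intro i; apply (proj1 (cover_map_spec i)).
  - intro q; exists (exist _ _ (cover_lift_supp q)); apply rp_eq; intro i; apply cover_liftK.
  - intro e; rewrite zeta_restricted_product; split.
    + intros He i; apply (proj2 (proj2 (cover_map_spec i))).
      change (proj1_sig (product_cover_map e) i = gone); rewrite He; reflexivity.
    + intro He; apply rp_eq; intro i; apply (proj2 (proj2 (cover_map_spec i))), He.
Qed.
End ProductOfCapable.

Section FactorsOfCapable.
Variables (I : Type) (G : I -> Group).
Hypothesis exp_ab_exists : forall i, exists n, exp_ab (G i) n.
Hypothesis exp_ab_coprime : forall i j, i <> j -> forall m n,
  exp_ab (G i) m -> exp_ab (G j) n -> Nat.gcd m n = 1.
Variables (k : nat) (E : Group) (psi : E -> RestrictedProduct G).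
Hypothesis psi_hom : is_hom psi.
Hypothesis psi_surj : forall g, exists e, psi e = g.
Hypothesis psi_ker : forall e, psi e = gone <-> zeta E (S k) e.

Local Notation pi := (upper_quotient_map E k).

Definition coord (e : E) (j : I) : G j := proj1_sig (psi e) j.

Lemma coordM x y j : coord (gmul x y) j = gmul (coord x j) (coord y j).
Proof. unfold coord; rewrite psi_hom; reflexivity. Qed.

Lemma coordV x j : coord (ginv x) j = ginv (coord x j).
Proof. unfold coord; rewrite (homV _ _ _ psi_hom); reflexivity. Qed.

Lemma coord1 j : coord gone j = gone.
Proof. unfold coord; rewrite (hom1 _ _ _ psi_hom); reflexivity. Qed.

Lemma coord_comm x y j : coord (comm x y) j = comm (coord x j) (coord y j).
Proof. unfold comm; rewrite !coordM, !coordV; reflexivity. Qed.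

Definition supported_at (l : I) (e : E) : Prop := forall j, l <> j -> coord e j = gone.

Lemma supported_at1 l : supported_at l gone.
Proof. intros j _; apply coord1. Qed.

Lemma supported_atM l x y : supported_at l x -> supported_at l y -> supported_at l (gmul x y).
Proof. intros Hx Hy j lj; rewrite coordM, Hx, Hy by exact lj; apply gmul1. Qed.

Lemma supported_atV l x : supported_at l x -> supported_at l (ginv x).
Proof. intros Hx j lj; rewrite coordV, Hx by exact lj; apply ginv1. Qed.

Lemma supported_lift l g : exists e, psi e = single l g /\ supported_at l e.
Proof.
  destruct (psi_surj (single l g)) as [e He]; exists e; split; [exact He|].
  intros j lj; unfold coord; rewrite He; apply single_off, lj.
Qed.

Lemma psi_supported l e : supported_at l e -> psi e = single l (coord e l).
Proof.
  intro Se; apply rp_eq; intro j; destruct (index_eq_dec l j) as [<-|lj].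
  - rewrite single_at; reflexivity.
  - rewrite single_off by exact lj; apply Se, lj.
Qed.

Lemma zeta_of_coord_trivial s : (forall j, coord s j = gone) -> zeta E (S k) s.
Proof. intro Hs; apply psi_ker, rp_eq, Hs. Qed.

Lemma zeta_comm_disjoint s t :
  (forall j, coord s j = gone \/ coord t j = gone) -> zeta E (S k) (comm s t).
Proof.
  intro Hst; apply zeta_of_coord_trivial; intro j; rewrite coord_comm.
  destruct (Hst j) as [-> | ->]; group.
Qed.

Lemma lift_derived l h : in_derived (G l) h ->
  exists d, comm_products (supported_at l) d /\ psi d = single l h.
Proof.
  induction 1 as [|a b h _ (d & Ud & Hd)].
  - exists gone; split; [constructor|].
    rewrite (hom1 _ _ _ psi_hom), (hom1 _ _ _ (single_hom _ _ l)); reflexivity.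
  - destruct (supported_lift l a) as (u & Hu & Su), (supported_lift l b) as (v & Hv & Sv).
    exists (gmul (comm u v) d); split; [constructor; auto|].
    rewrite psi_hom, (hom_comm _ _ _ psi_hom), Hu, Hv, Hd, (single_hom _ _ l).
    rewrite (hom_comm _ _ _ (single_hom _ _ l)); reflexivity.
Qed.

Lemma quotient_comm_pow_exp_ab l n s t : exp_ab (G l) n -> supported_at l s ->
  (forall s', supported_at l s' -> zeta E (S k) (comm s' t)) ->
  gpow (comm (pi s) (pi t)) n = gone.
Proof.
  intros (_ & pow_derived & _) Ss Ht.
  destruct (lift_derived l _ (pow_derived (coord s l))) as (d & Ud & Hd).
  set (z := gmul (ginv d) (gpow s n)).
  assert (Hz : zeta E (S k) z).
  { apply psi_ker; unfold z.
    rewrite psi_hom, (homV _ _ _ psi_hom), Hd, (hom_pow _ _ _ psi_hom), (psi_supported l s Ss).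
    rewrite <- (hom_pow _ _ _ (single_hom _ _ l)); apply gmulV. }
  pose proof (upper_quotient_map_hom E k) as pi_hom.
  apply (comm_pow_eq1_of_pow_derived _ (pi t)
           (fun q => exists s', supported_at l s' /\ q = pi s') _ n (pi d) (pi z)).
  - intros q (s' & Ss' & ->); rewrite <- (hom_comm _ _ _ pi_hom).
    apply upper_quotient_map_central, Ht, Ss'.
  - exists s; auto.
  - apply comm_products_hom; assumption.
  - rewrite <- (hom_comm _ _ _ pi_hom); apply upper_quotient_map_eq1, Hz.
  - rewrite <- (hom_pow _ _ _ pi_hom), <- pi_hom; unfold z; f_equal; group.
Qed.

Lemma zeta_comm_supported_distinct i l a b : i <> l ->
  supported_at i a -> supported_at l b -> zeta E k (comm a b).
Proof.
  intros il Sa Sb.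
  destruct (exp_ab_exists i) as [ni Hni], (exp_ab_exists l) as [nl Hnl].
  apply upper_quotient_map_eq1; rewrite (hom_comm _ _ _ (upper_quotient_map_hom E k)).
  apply (gpow_coprime_eq1 _ _ ni nl); [apply Hni|apply (exp_ab_coprime i l); auto| |].
  - apply (quotient_comm_pow_exp_ab i); auto.
    intros s' Ss'; apply zeta_comm_disjoint; intro j.
    destruct (index_eq_dec i j) as [<-|ij]; [right; apply Sb; congruence|left; apply Ss', ij].
  - rewrite <- invg_comm, gpowV, (quotient_comm_pow_exp_ab l); [apply ginv1|auto..].
    intros s' Ss'; apply zeta_comm_disjoint; intro j.
    destruct (index_eq_dec l j) as [<-|lj]; [right; apply Sa; congruence|left; apply Ss', lj].
Qed.

Variable i : I.

Lemma zeta_comm_supported_trivial_at a b :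
  supported_at i a -> coord b i = gone -> zeta E k (comm a b).
Proof.
  intro Sa; destruct (proj2_sig (psi b)) as [ls Hls].
  change (forall j, ~ In j ls -> coord b j = gone) in Hls; revert b Hls.
  induction ls as [|j ls IH]; intros b Hls bi.
  - apply zeta_comm_sym; apply (zeta_of_coord_trivial b); intro j; apply Hls; intros [].
  - destruct (index_eq_dec i j) as [<-|ij].
    { apply IH; auto; intros j' Hj'; destruct (index_eq_dec i j') as [<-|ij']; [exact bi|].
      apply Hls; intros [|]; auto. }
    destruct (supported_lift j (coord b j)) as (b1 & Hb1 & Sb1).
    assert (b1_coord : forall j', j <> j' -> coord b1 j' = gone) by exact Sb1.
    set (b' := gmul (ginv b1) b).
    replace b with (gmul b1 b') by (unfold b'; group).
    rewrite commgM; apply zetaM; [|apply zetaJ, (zeta_comm_supported_distinct i j); auto].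
    apply IH; [intros j' Hj'|]; unfold b'; rewrite coordM, coordV.
    + destruct (index_eq_dec j j') as [<-|jj'].
      * unfold coord at 1; rewrite Hb1, single_at; apply gmulV.
      * rewrite b1_coord, Hls by (exact jj' || intros [|]; auto); group.
    + rewrite b1_coord, bi by congruence; group.
Qed.

Lemma supported_trivial_decomposition e :
  exists a b, supported_at i a /\ coord b i = gone /\ e = gmul a b.
Proof.
  destruct (psi_surj (gmul (ginv (single i (coord e i))) (psi e))) as [b Hb].
  assert (b_coord : forall j,
            coord b j = gmul (ginv (proj1_sig (single i (coord e i)) j)) (coord e j))
    by (intro j; unfold coord at 1; rewrite Hb; reflexivity).
  exists (gmul e (ginv b)), b; split; [|split].
  - intros j ij; rewrite coordM, coordV, b_coord, single_off by exact ij; group.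
  - rewrite b_coord, single_at; apply gmulV.
  - group.
Qed.

Definition factor_preimage : Group :=
  subgroup E (supported_at i) (supported_at1 i) (supported_atM i) (supported_atV i).

Lemma zeta_comm_left_normed_trivial_at m y : left_normed (supported_at i) m y ->
  forall n b, m + n = S k -> coord b i = gone -> zeta E n (comm y b).
Proof.
  induction 1 as [a Sa|m y a Hy IH Sa]; intros n b Hmn bi.
  - replace n with k by lia; apply zeta_comm_supported_trivial_at; assumption.
  - rewrite hall_witt; apply zetaJ, zetaV, zetaM; apply zetaJ.
    + apply (zeta_comm_left_normed E _ m y Hy); replace (n + m) with k by lia.
      apply zeta_comm_supported_trivial_at; [apply supported_atV, Sa|].
      rewrite coordV, bi; apply ginv1.
    + assert (Hby : zeta E (S n) (comm b (ginv y))).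
      { rewrite commgV; apply zetaJ, zetaV, zeta_comm_sym, IH; [lia|exact bi]. }
      apply Hby.
Qed.

Lemma zeta_factor_preimage j w (x : factor_preimage) : j + w = S (S k) ->
  zeta factor_preimage j x -> left_normed (supported_at i) w (proj1_sig x) ->
  zeta E j (proj1_sig x).
Proof.
  revert w x; induction j as [|j IH]; intros w x Hjw Hx Hw.
  - simpl in Hx |- *; rewrite Hx; reflexivity.
  - intro e; destruct (supported_trivial_decomposition e) as (a & b & Sa & bi & ->).
    rewrite commgM; apply zetaM.
    + apply (zeta_comm_left_normed_trivial_at w); [exact Hw|lia|exact bi].
    + apply zetaJ.
      change (comm (proj1_sig x) a) with (proj1_sig (comm (G := factor_preimage) x (exist _ a Sa))).
      apply (IH (S w)); [lia|apply Hx|simpl; constructor; assumption].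
Qed.

Lemma Nc_capable_factor : Nc_capable (S k) (G i).
Proof.
  exists factor_preimage, (fun x => coord (proj1_sig x) i); split; [|split].
  - intros x y; apply coordM.
  - intro g; destruct (supported_lift i g) as (e & He & Se); exists (exist _ e Se); simpl.
    unfold coord; rewrite He; apply single_at.
  - intros [e Se]; change (coord e i = gone <-> zeta factor_preimage (S k) (exist _ e Se)).
    split; intro He.
    + apply zeta_subgroup, zeta_of_coord_trivial; intro j.
      destruct (index_eq_dec i j) as [<-|ij]; [exact He|apply Se, ij].
    + assert (Hz : zeta E (S k) e).
      { apply (zeta_factor_preimage (S k) 1 (exist _ e Se)); [lia|exact He|constructor; exact Se]. }
      apply psi_ker in Hz; unfold coord; rewrite Hz; reflexivity.
Qed.
End FactorsOfCapable.

Theorem mainTheorem3 (I : Type) (G : I -> Group)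
  (Hexp : forall i, exists n, exp_ab (G i) n)
  (Hcop : forall i j, i <> j -> forall m n,
            exp_ab (G i) m -> exp_ab (G j) n -> Nat.gcd m n = 1) :
  (capable (RestrictedProduct G) <-> forall i, capable (G i)) /\
  (forall c : nat, 1 <= c ->
     (Nc_capable c (RestrictedProduct G) <-> forall i, Nc_capable c (G i))).
Proof.
  assert (Nc_iff : forall c, 1 <= c ->
    (Nc_capable c (RestrictedProduct G) <-> forall i, Nc_capable c (G i))).
  { intros [|k] Hk; [lia|]; split.
    - intros (E & psi & psi_hom & psi_surj & psi_ker) i.
      exact (Nc_capable_factor I G Hexp Hcop k E psi psi_hom psi_surj psi_ker i).
    - apply Nc_capable_restricted_product. }
  split; [|exact Nc_iff].
  rewrite capable_iff_Nc_capable1, Nc_iff by lia.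
  split; intros HG i; apply capable_iff_Nc_capable1, HG.
Qed.
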